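(* For $n\ge 4$ let $G'_n$ be the directed graph with nodes $0,\dots,n-1$ and arcs: $i\to i+1$ for $0\le i\le n-5$; $(n-4)\to(n-3)$; $(n-4)\to(n-1)$; $(n-1)\to(n-2)$; $(n-2)\to(n-1)$; and $j\to 0$ for every $1\le j\le n-1$. Then $\lim_{n\to\infty}R(G'_n)=1$.
   Context: $d_G(x,y)$ is the shortest directed path length from $x$ to $y$ ($\infty$ if none). The distance-count matrix $C_G\in\mathbb{R}^{n\times n}$ has $(C_G)_{i,k}=|\{j: d_G(j,i)=k\}|$. For $\mathbf a\in\mathbb{R}^{\mathbb{N}}$ (with $a_0$ arbitrary) the linear centrality is $f^{\mathbf a}_G(i)=\sum_{k=0}^{n-1}(C_G)_{i,k}a_k$. A permutation $\pi$ of $\{0,\dots,n-1\}$ is representable by $G$ if there is $\mathbf a$ with $f^{\mathbf a}_G(\pi(0))>\dots>f^{\mathbf a}_G(\pi(n-1))$. $R(G)=|\{\pi\in S_n:\pi\text{ representable by }G\}|/n!$. *)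

From HB Require Import structures.
From mathcomp Require Import all_boot all_order all_algebra all_fingroup.
From mathcomp Require Import all_classical all_reals all_analysis.
Set Implicit Arguments. Unset Strict Implicit. Unset Printing Implicit Defensive.
Import Order.TTheory GRing.Theory Num.Theory.
Local Open Scope ring_scope.

(* A directed graph on nodes {0,...,n-1} is a relation e on 'I_n: e x y = arc x -> y. *)

Fixpoint walk (n : nat) (e : rel 'I_n) (k : nat) (x y : 'I_n) : bool :=
  match k with
  | 0 => x == y
  | k'.+1 => [exists z : 'I_n, e x z && walk e k' z y]
  end.

(* dist_is e x y k : d_G(x,y) = k, i.e. k is the length of a shortest directed
   walk (equivalently path) from x to y. d = infinity corresponds to no k. *)
Definition dist_is (n : nat) (e : rel 'I_n) (x y : 'I_n) (k : nat) : bool :=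
  walk e k x y && [forall m : 'I_k, ~~ walk e m x y].

Definition dcount (n : nat) (e : rel 'I_n) (i : 'I_n) (k : nat) : nat :=
  #|[set j : 'I_n | dist_is e j i k]|.

Definition lincent (R : realType) (n : nat) (e : rel 'I_n) (a : nat -> R)
  (i : 'I_n) : R :=
  \sum_(k < n) (dcount e i k)%:R * a k.

Definition representable (R : realType) (n : nat) (e : rel 'I_n)
  (pi : 'S_n) : Prop :=
  exists a : nat -> R,
    forall i j : 'I_n, (i < j)%N -> lincent e a (pi j) < lincent e a (pi i).

Definition Rratio (R : realType) (n : nat) (e : rel 'I_n) : R :=
  (#|[set pi : 'S_n | `[< representable R e pi >]]|)%:R / (n`!)%:R.

Definition Gp (n : nat) : rel 'I_n := fun i j =>
  [|| (((val i).+1 == val j) && (val i + 5 <= n))%N,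
      ((val i == n - 4) && (val j == n - 3))%N,
      ((val i == n - 4) && (val j == n - 1))%N,
      ((val i == n - 1) && (val j == n - 2))%N,
      ((val i == n - 2) && (val j == n - 1))%N
    | ((1 <= val i) && (val j == 0))%N].

From HB Require Import structures.
From mathcomp Require Import all_boot all_order all_algebra all_fingroup.
From mathcomp Require Import all_classical all_reals all_analysis.
From mathcomp Require Import zify ring lra.
Set Implicit Arguments. Unset Strict Implicit. Unset Printing Implicit Defensive.
Import Order.TTheory GRing.Theory Num.Theory numFieldNormedType.Exports.
Local Open Scope ring_scope.

(* Write n = m + 4 and c = m + 3.  The centrality of a node x is
   f(x) = sum_j a_{d(j,x)}, and computing the distances shows that a -> f is
   triangular on the nodes other than c: for any targets V_0, ..., V_{m+2}
   there are coefficients a with f(x) = V_x for x <> c, and then f(c) is forced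
   to be a convex combination of V_0, ..., V_{m+1} in which every weight is at
   least 1/n^2.  Hence c can be ranked anywhere except at the top two or bottom
   two places: if c has rank r in [2, m+1], give the nodes above c the values
   n^3 - rank and those below c the values -rank; the weight bound pins f(c)
   between the two groups.  A uniformly random permutation puts c at each rank
   with probability 1/n, so R(G'_n) >= 1 - 4/n. *)

Section ShortestWalks.
Variables (n : nat) (e : rel 'I_n) (d : 'I_n -> 'I_n -> nat).
Hypothesis d_refl : forall x, d x x = 0%N.
Hypothesis d_arc : forall x j z, e j z -> (d j x <= (d z x).+1)%N.
Hypothesis d_step : forall j x, j != x -> exists2 z, e j z & (d z x).+1 = d j x.

Lemma walk_dist_le k j x : walk e k j x -> (d j x <= k)%N.
Proof.
elim: k j => [|k IHk] j /=; first by move=> /eqP ->; rewrite d_refl.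
by case/existsP=> z /andP[ejz /IHk le_dk]; exact: leq_trans (d_arc x ejz) _.
Qed.

Lemma walk_dist j x : walk e (d j x) j x.
Proof.
move Ek: (d j x) => k; elim: k j Ek => [|k IHk] j Ek /=.
  by case: (eqVneq j x) => // /d_step[z _ dz]; rewrite -dz in Ek.
have [z ejz dz] : exists2 z, e j z & (d z x).+1 = d j x.
  by apply: d_step; apply/eqP => eq_jx; move: Ek; rewrite eq_jx d_refl.
by apply/existsP; exists z; rewrite ejz IHk //; apply: succn_inj; rewrite dz Ek.
Qed.

Lemma dist_isE j x k : dist_is e j x k = (k == d j x).
Proof.
apply/andP/eqP => [[/walk_dist_le le_dk /forallP not_shorter] | ->].
  apply/eqP; rewrite eqn_leq le_dk andbT leqNgt; apply/negP => lt_dk.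
  by have := not_shorter (Ordinal lt_dk); rewrite walk_dist.
split; first exact: walk_dist.
by apply/forallP => m; apply/negP => /walk_dist_le; rewrite leqNgt ltn_ord.
Qed.

Lemma lincent_dist (R : realType) (a : nat -> R) x :
  (forall j, d j x < n)%N -> lincent e a x = \sum_(j < n) a (d j x).
Proof.
move=> d_lt; rewrite /lincent.
rewrite [RHS](partition_big (fun j => Ordinal (d_lt j)) predT) //=.
apply: eq_bigr => k _; rewrite (eq_bigr (fun=> a k)) => [|j /eqP <- //].
rewrite sumr_const mulr_natl /dcount; congr (_ *+ _); apply: eq_card => j.
by rewrite inE dist_isE eq_sym.
Qed.

End ShortestWalks.

(* In G'_(m+4) the nodes 0, ..., m form a path leaving 0, the arcs from m lead
   to m+1 and m+3, and m+2, m+3 form a 2-cycle; [gp_depth m x] is d(0, x).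
   Since every j >= 1 has an arc to 0, a shortest walk from j to x either runs
   along the path (when j <= m precedes x) or goes through 0, except inside
   the 2-cycle. *)
Definition gp_depth (m x : nat) : nat := (if x == m.+2 then m.+2 else minn x m.+1)%N.

Definition gp_dist (m j x : nat) : nat :=
  (if j == x then 0
   else if (m.+2 <= j) && (m.+2 <= x) then 1
   else if (j <= m) && (j <= gp_depth m x) then gp_depth m x - j
   else (gp_depth m x).+1)%N.

Definition gp_next (m j x : nat) : nat :=
  (if (m.+2 <= j) && (m.+2 <= x) then x
   else if (j <= m) && (j <= gp_depth m x) then
     (if j < m then j.+1 else if x == m.+1 then m.+1 else m.+3)
   else 0)%N.

Ltac case_ifs := repeat (let h := fresh in case: ifP => h; rewrite ?h /=; move: h).
Ltac gp_dist_lia := rewrite /gp_dist /gp_depth; case_ifs; lia.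

Section GpDistance.
Local Open Scope nat_scope.

Variable m : nat.
Local Notation n := m.+4.

Lemma gp_dist_lt j x : gp_dist m j x < n.
Proof. by gp_dist_lia. Qed.

Lemma gp_dist_arc (x j z : 'I_n) : Gp j z -> gp_dist m j x <= (gp_dist m z x).+1.
Proof.
by move: (ltn_ord j) (ltn_ord z) (ltn_ord x); rewrite /Gp /=; gp_dist_lia.
Qed.

Lemma gp_dist_step (j x : 'I_n) :
  j != x -> exists2 z : 'I_n, Gp j z & (gp_dist m z x).+1 = gp_dist m j x.
Proof.
move: (ltn_ord j) (ltn_ord x); rewrite -val_eqE => lt_jn lt_xn neq_jx.
have lt_next : gp_next m j x < n by rewrite /gp_next /gp_depth; case_ifs; lia.
exists (Ordinal lt_next); move: neq_jx; rewrite /Gp /= /gp_next /gp_depth;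
  case_ifs; gp_dist_lia.
Qed.

End GpDistance.

Lemma lincent_Gp (R : realType) m (a : nat -> R) (x : 'I_m.+4) :
  lincent (@Gp m.+4) a x = \sum_(j < m.+4) a (gp_dist m j x).
Proof.
apply: (@lincent_dist _ _ (fun j y : 'I_m.+4 => gp_dist m j y)) => [y|y j z|j y|j].
- by rewrite /gp_dist eqxx.
- exact: gp_dist_arc.
- exact: gp_dist_step.
- exact: gp_dist_lt.
Qed.

Section Columns.
Variables (R : realType) (m : nat) (a : nat -> R).
Local Notation col x := (\sum_(j < m.+4) a (gp_dist m j x)).

Lemma sum_rev_shift N s : \sum_(j < N) a (N + s - j)%N = \sum_(j < N) a (j.+1 + s)%N.
Proof.
rewrite (reindex_inj rev_ord_inj) /=; apply: eq_bigr => j _.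
by congr a; have := ltn_ord j; lia.
Qed.

Lemma gp_column_low x : (x <= m)%N ->
  col x = \sum_(k < x.+1) a k + (m.+3 - x)%:R * a x.+1.
Proof.
move=> le_xm; rewrite -(big_mkord xpredT (fun j => a (gp_dist m j x))).
rewrite (@big_cat_nat _ _ _ x.+1) //=; last by lia.
congr (_ + _).
  rewrite big_nat_rev -(big_mkord xpredT a) /=.
  by apply: eq_big_nat => j /andP[_ lt_jx]; congr a; gp_dist_lia.
rewrite (eq_big_nat _ _ (F2 := fun=> a x.+1)) => [|j /andP[lt_xj lt_jn]].
  by rewrite sumr_const_nat mulr_natl; congr (_ *+ _); lia.
by congr a; gp_dist_lia.
Qed.

Lemma gp_column_top x : (m < x < m.+4)%N -> col x =
  \sum_(j < m.+1) a (gp_depth m x - j)%N + a (gp_dist m m.+1 x) + a (gp_dist m m.+2 x)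
  + a (gp_dist m m.+3 x).
Proof.
move=> /andP[lt_mx lt_xn]; rewrite big_ord_recr big_ord_recr big_ord_recr /=.
by congr (_ + _ + _ + _); apply: eq_bigr => j _; congr a; have := ltn_ord j; gp_dist_lia.
Qed.

Lemma gp_column_m1 : col m.+1 = \sum_(k < m.+2) a k + a m.+2 + a m.+2.
Proof.
rewrite gp_column_top; last by lia.
have -> : gp_depth m m.+1 = (m.+1 + 0)%N by gp_dist_lia.
have -> : gp_dist m m.+1 m.+1 = 0%N by gp_dist_lia.
have -> : gp_dist m m.+2 m.+1 = m.+2 by gp_dist_lia.
have -> : gp_dist m m.+3 m.+1 = m.+2 by gp_dist_lia.
rewrite sum_rev_shift [in RHS]big_ord_recl /=.
under eq_bigr do rewrite addn0.
lra.
Qed.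

Lemma gp_column_m2 : col m.+2 = \sum_(k < m.+3) a k + a m.+3.
Proof.
rewrite gp_column_top; last by lia.
have -> : gp_depth m m.+2 = (m.+1 + 1)%N by gp_dist_lia.
have -> : gp_dist m m.+1 m.+2 = m.+3 by gp_dist_lia.
have -> : gp_dist m m.+2 m.+2 = 0%N by gp_dist_lia.
have -> : gp_dist m m.+3 m.+2 = 1%N by gp_dist_lia.
rewrite sum_rev_shift [in RHS]big_ord_recl [in RHS]big_ord_recl /=.
under eq_bigr do rewrite addn1.
lra.
Qed.

Lemma gp_column_m3 : col m.+3 = \sum_(k < m.+2) a k + a m.+2 + a 1%N.
Proof.
rewrite gp_column_top; last by lia.
have -> : gp_depth m m.+3 = (m.+1 + 0)%N by gp_dist_lia.
have -> : gp_dist m m.+1 m.+3 = m.+2 by gp_dist_lia.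
have -> : gp_dist m m.+2 m.+3 = 1%N by gp_dist_lia.
have -> : gp_dist m m.+3 m.+3 = 0%N by gp_dist_lia.
rewrite sum_rev_shift [in RHS]big_ord_recl /=.
under eq_bigr do rewrite addn0.
lra.
Qed.

End Columns.

Section MixWeights.
Variables (R : realFieldType) (m : nat).

Definition gp_weight (k : nat) : R := ((m.+3 - k) * (m.+2 - k))%:R^-1.

Definition mix_weight (k : nat) : R := if k == 0%N then m.+2%:R^-1 else gp_weight k.

Lemma sum_gp_weight N : (N <= m.+2)%N ->
  \sum_(k < N) gp_weight k = (m.+3 - N)%:R^-1 - m.+3%:R^-1.
Proof.
move=> le_Nm; have := telescope_sumr (fun k => (m.+3 - k)%:R^-1 : R) (leq0n N).
rewrite subn0 -(big_mkord xpredT) => <-.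
apply: eq_big_nat => k /andP[_ lt_kN]; rewrite /gp_weight subSS.
have -> : (m.+3 - k = (m.+2 - k).+1)%N by lia.
by rewrite natrM; field; rewrite nat1r !pnatr_eq0; lia.
Qed.

Lemma mix_weight_sum (F : nat -> R) :
  \sum_(k < m.+2) mix_weight k * F k = \sum_(k < m.+2) gp_weight k * F k + F 0%N / m.+3%:R.
Proof.
have mix_weight0 : mix_weight 0 = gp_weight 0 + m.+3%:R^-1.
  rewrite /mix_weight /gp_weight !subn0 natrM.
  by field; rewrite -?natrD ?pnatr_eq0.
by rewrite !big_ord_recl /= mix_weight0 /mix_weight /=; ring.
Qed.

Lemma mix_weight_total : \sum_(k < m.+2) mix_weight k = 1.
Proof.
under eq_bigr do rewrite -[mix_weight _]mulr1.
rewrite (mix_weight_sum (fun=> 1)).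
under eq_bigr do rewrite mulr1.
by rewrite sum_gp_weight // subSnn invr1 mul1r subrK.
Qed.

Lemma mix_weight_ge k : (k < m.+2)%N -> (m.+4%:R ^+ 2)^-1 <= mix_weight k.
Proof.
move=> lt_km; rewrite -natrX /mix_weight /gp_weight.
case: eqP => _; rewrite lef_pV2 ?posrE ?ltr0n ?ler_nat; nia.
Qed.

Lemma mix_weight_ge0 k : 0 <= mix_weight k.
Proof. by rewrite /mix_weight /gp_weight; case: eqP => _; rewrite invr_ge0 ler0n. Qed.

End MixWeights.

Section Construction.
Variables (R : realType) (m : nat) (V : nat -> R).
Local Notation n := m.+4.

Definition gp_mix : R := \sum_(k < m.+2) mix_weight R m k * V k.

Definition weighted_prefix (k : nat) : R := \sum_(i < k) gp_weight R m i * V i.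

(* [coef_prefix x] is meant to be the partial sum a_0 + ... + a_x of the
   coefficients.  For x <= m the column sum f(x) = coef_prefix x + (m+3-x) a_(x+1)
   then telescopes to V x, because (m+3-x) (m+2-x) gp_weight x = 1; the last two
   coefficients are fixed by f(m+1) = V (m+1) and f(m+2) = V (m+2). *)
Definition coef_prefix (k : nat) : R := (m.+3 - k)%:R * weighted_prefix k.

Definition gp_coef (k : nat) : R :=
  if k == 0%N then 0
  else if (k <= m.+1)%N then coef_prefix k - coef_prefix k.-1
  else if k == m.+2 then (V m.+1 - coef_prefix m.+1) / 2
  else V m.+2 - coef_prefix m.+1 - (V m.+1 - coef_prefix m.+1) / 2.

Lemma sum_gp_coef x : (x <= m.+1)%N -> \sum_(k < x.+1) gp_coef k = coef_prefix x.
Proof.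
elim: x => [|x IHx] le_xm.
  by rewrite big_ord1 /gp_coef /coef_prefix /weighted_prefix big_ord0 mulr0.
rewrite big_ord_recr /= IHx; last by lia.
rewrite /gp_coef /= ifT; last by lia.
by rewrite addrC subrK.
Qed.

Lemma gp_coef_m2 : gp_coef m.+2 = (V m.+1 - coef_prefix m.+1) / 2.
Proof. by rewrite /gp_coef /= ltnn eqxx. Qed.

Lemma gp_coef_m3 : gp_coef m.+3 = V m.+2 - coef_prefix m.+1 - gp_coef m.+2.
Proof. by rewrite gp_coef_m2 /gp_coef /= !ifF //; lia. Qed.

Lemma column_gp_coef_low x : (x <= m)%N -> \sum_(j < n) gp_coef (gp_dist m j x) = V x.
Proof.
move=> le_xm; rewrite gp_column_low // sum_gp_coef; last by lia.
rewrite /gp_coef /= ifT; last by lia.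
rewrite /coef_prefix /weighted_prefix big_ord_recr /= /gp_weight subSS.
have -> : (m.+3 - x = (m.+2 - x).+1)%N by lia.
by rewrite natrM; field; rewrite nat1r !pnatr_eq0; lia.
Qed.

Lemma column_gp_coef_m1 : \sum_(j < n) gp_coef (gp_dist m j m.+1) = V m.+1.
Proof. by rewrite gp_column_m1 sum_gp_coef // gp_coef_m2; field. Qed.

Lemma column_gp_coef_m2 : \sum_(j < n) gp_coef (gp_dist m j m.+2) = V m.+2.
Proof. by rewrite gp_column_m2 big_ord_recr /= sum_gp_coef // gp_coef_m3; ring. Qed.

Lemma column_gp_coef_m3 : \sum_(j < n) gp_coef (gp_dist m j m.+3) = gp_mix.
Proof.
have coef1 : gp_coef 1 = V 0%N / m.+3%:R.
  rewrite /gp_coef /= /coef_prefix /weighted_prefix big_ord1 big_ord0 /gp_weight.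
  by rewrite !subn0 subSS subn0 natrM mulr0 subr0; field; rewrite -?natrD ?pnatr_eq0.
have weight_last : gp_weight R m m.+1 = 2^-1.
  by rewrite /gp_weight (_ : (_ * _ = 2)%N) //; lia.
rewrite gp_column_m3 sum_gp_coef // gp_coef_m2 coef1 /gp_mix mix_weight_sum.
rewrite /coef_prefix (_ : (m.+3 - m.+1 = 2)%N); last by lia.
by rewrite /weighted_prefix [in RHS]big_ord_recr /= weight_last; field.
Qed.

Lemma lincent_gp_coef (x : 'I_n) :
  lincent (@Gp n) gp_coef x = if x == ord_max then gp_mix else V x.
Proof.
rewrite lincent_Gp -val_eqE /=.
have [le_xm|lt_mx] := leqP x m; first by rewrite column_gp_coef_low // ifF //; lia.
have : [|| x == m.+1 :> nat, x == m.+2 :> nat | x == m.+3 :> nat].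
  by have := ltn_ord x; lia.
case/or3P=> /eqP->.
- by rewrite column_gp_coef_m1 ifF //; lia.
- by rewrite column_gp_coef_m2 ifF //; lia.
- by rewrite column_gp_coef_m3 eqxx.
Qed.

End Construction.

Section ConvexCombination.
Variables (R : numDomainType) (I : finType) (w : I -> R).
Hypotheses (w_ge0 : forall i, 0 <= w i) (w_sum1 : \sum_i w i = 1).

Lemma convex_comb_ge (v : I -> R) (lo d : R) x : (forall i, lo <= v i) -> d <= w x ->
  lo + d * (v x - lo) <= \sum_i w i * v i.
Proof.
move=> lo_v le_dw.
have -> : \sum_i w i * v i = lo + \sum_i w i * (v i - lo).
  under [in RHS]eq_bigr do rewrite mulrBr.
  by rewrite sumrB -mulr_suml w_sum1 mul1r addrC subrK.
rewrite lerD2l (bigD1 x) //= ler_wpDr ?ler_wpM2r ?subr_ge0 //.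
by rewrite sumr_ge0 // => i _; rewrite mulr_ge0 ?subr_ge0.
Qed.

Lemma convex_comb_le (v : I -> R) (hi d : R) x : (forall i, v i <= hi) -> d <= w x ->
  \sum_i w i * v i <= hi - d * (hi - v x).
Proof.
move=> v_hi le_dw.
have Nv_ge i : - hi <= - v i by rewrite lerN2.
have := convex_comb_ge Nv_ge le_dw.
rewrite (eq_bigr (fun i => - (w i * v i))) => [|i _]; last by rewrite mulrN.
by rewrite sumrN lerNr (_ : - _ = hi - d * (hi - v x)) //; ring.
Qed.

End ConvexCombination.

Section Representation.
Variables (R : realType) (m : nat) (pi : 'S_(m.+4)).
Local Notation n := m.+4.
Let r : 'I_n := (pi^-1)%g ord_max.
Hypothesis r_mid : (2 <= r <= m.+1)%N.

Let K : R := n%:R ^+ 3.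
Let G (k : nat) : R := if (k < r)%N then K - k%:R else - k%:R.
Let V (k : nat) : R := G ((pi^-1)%g (inord k)).

Let K_ge0 : 0 <= K. Proof. by rewrite exprn_ge0. Qed.

Let V_pi i : V (pi i) = G i.
Proof. by rewrite /V inord_val permK. Qed.

Let pi_eq_max i : (pi i == ord_max) = (i == r).
Proof. by rewrite -(inj_eq (@perm_inj _ (pi^-1)%g)) permK. Qed.

Let G_ge (i : 'I_n) : - n%:R <= G i.
Proof.
have : i%:R <= n%:R :> R by rewrite ler_nat ltnW.
by rewrite /G; case: ifP => _; have := K_ge0; lra.
Qed.

Let G_le i : G i <= K.
Proof. by rewrite /G; case: ifP => _; have := ler0n R i; have := K_ge0; lra. Qed.

Let G_decr (i j : nat) : (i < j)%N -> G j < G i.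
Proof.
move=> lt_ij; have ltR_ij : i%:R < j%:R :> R by rewrite ltr_nat.
have := ler0n R i; have := K_ge0; rewrite /G.
case: (ltnP j r) => [lt_jr|_]; first by rewrite ifT ?(ltn_trans lt_ij) //; lra.
by case: ifP => _; lra.
Qed.

Let position_below (i j : 'I_n) : i != j -> i != r -> j != r ->
  exists2 k, (k == i) || (k == j) & (pi k < m.+2)%N.
Proof.
rewrite -(inj_eq (@perm_inj _ pi)) -!pi_eq_max -!val_eqE /= => ne_ij ne_ir ne_jr.
have [lt_i|ge_i] := ltnP (pi i) m.+2; first by exists i; rewrite ?eqxx.
exists j; rewrite ?eqxx ?orbT //; have := ltn_ord (pi j); have := ltn_ord (pi i); lia.
Qed.

Let inv_n2_ge0 : 0 <= (n%:R ^+ 2 : R)^-1.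
Proof. by rewrite invr_ge0 exprn_ge0. Qed.

Let n2_K : (n%:R ^+ 2)^-1 * K = n%:R.
Proof. by rewrite /K [_ ^+ 3]exprSr mulKf // expf_neq0 // pnatr_eq0. Qed.

Let mix_bounds (x : 'I_m.+2) (d := (n%:R ^+ 2)^-1) :
  - n%:R + d * (V x - - n%:R) <= gp_mix m V <= K - d * (K - V x).
Proof.
have w_ge0 (k : 'I_m.+2) := mix_weight_ge0 R m k.
have w_sum1 : \sum_(k < m.+2) mix_weight R m k = 1 := mix_weight_total R m.
have w_ge := mix_weight_ge R (ltn_ord x).
rewrite /gp_mix; apply/andP; split.
  by apply: (convex_comb_ge w_ge0 w_sum1) w_ge => k; apply: G_ge.
by apply: (convex_comb_le w_ge0 w_sum1) w_ge => k; apply: G_le.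
Qed.

Let gp_mix_ge0 : 0 <= gp_mix m V.
Proof.
have [k le_k1 lt_k] : exists2 k : 'I_n, (k <= 1)%N & (pi k < m.+2)%N.
  have ne01 : (ord0 : 'I_n) != inord 1 by rewrite -val_eqE /= inordK.
  have ne0r : (ord0 : 'I_n) != r by rewrite -val_eqE /=; lia.
  have ne1r : (inord 1 : 'I_n) != r by rewrite -val_eqE /= inordK //; lia.
  have [k /orP[]/eqP-> lt_k] := position_below ne01 ne0r ne1r.
    by exists ord0.
  by exists (inord 1); rewrite ?inordK.
have /andP[+ _] := mix_bounds (Ordinal lt_k); rewrite /= V_pi opprK.
have K_Gk : K <= G k + n%:R.
  have : k%:R <= n%:R :> R by rewrite ler_nat; lia.
  by rewrite /G ifT; [lra | lia].
have := ler_wpM2l inv_n2_ge0 K_Gk.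
by rewrite n2_K; set X := _ * (G k + _); lra.
Qed.

Let gp_mix_le : gp_mix m V <= K - n%:R.
Proof.
have [k ge_k lt_k] : exists2 k : 'I_n, (m.+2 <= k)%N & (pi k < m.+2)%N.
  have ne_last : (inord m.+2 : 'I_n) != ord_max by rewrite -val_eqE /= inordK; lia.
  have ne2r : (inord m.+2 : 'I_n) != r by rewrite -val_eqE /= inordK //; lia.
  have ne3r : (ord_max : 'I_n) != r by rewrite -val_eqE /=; lia.
  have [k /orP[]/eqP-> lt_k] := position_below ne_last ne2r ne3r.
    by exists (inord m.+2); rewrite ?inordK.
  by exists ord_max.
have /andP[_] := mix_bounds (Ordinal lt_k); rewrite /= V_pi.
have K_KGk : K <= K - G k.
  have := ler0n R k; rewrite /G ifF; [lra | lia].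
have := ler_wpM2l inv_n2_ge0 K_KGk.
by rewrite n2_K; set X := _ * (K - G k); lra.
Qed.

Lemma representable_mid : representable R (@Gp n) pi.
Proof.
exists (gp_coef m V) => i j lt_ij; rewrite !lincent_gp_coef !pi_eq_max !V_pi.
have mix_ge0 := gp_mix_ge0; have mix_le := gp_mix_le.
have j_gt0 : 0 < j%:R :> R by rewrite ltr0n (leq_ltn_trans (leq0n i)).
have lt_Kn : K - n%:R < K - i%:R by rewrite ltrD2l ltrN2 ltr_nat.
case: (eqVneq i r) => [eq_ir | _]; case: (eqVneq j r) => [eq_jr | _].
- by move: lt_ij; rewrite eq_ir eq_jr ltnn.
- by rewrite /G ifF -?eq_ir; [lra | lia].
- by rewrite /G ifT -?eq_jr //; lra.
- exact: G_decr.
Qed.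

End Representation.

Section RankClasses.
Variables (n : nat) (c : 'I_n).

Definition rank_class (r : 'I_n) : {set 'S_n} := [set s : 'S_n | (s^-1)%g c == r].

Lemma card_rank_class_le (r r' : 'I_n) : (#|rank_class r| <= #|rank_class r'|)%N.
Proof.
rewrite -(card_imset _ (mulgI (tperm r r'))); apply/subset_leq_card/fintype.subsetP.
move=> t /imsetP[s]; rewrite !inE => /eqP s_c ->.
by rewrite invMg permM tpermV s_c tpermL.
Qed.

Lemma card_rank_class (r : 'I_n) : (n * #|rank_class r|)%N = n`!.
Proof.
have <- : (\sum_(r' < n) #|rank_class r'|)%N = n`!.
  rewrite -card_Sn -sum1_card (partition_big (fun s : 'S_n => (s^-1)%g c) predT) //=.
  by apply: eq_bigr => r' _; rewrite -sum1_card; apply: eq_bigl => s; rewrite inE.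
rewrite (eq_bigr (fun=> #|rank_class r|)) ?sum_nat_const ?card_ord // => r' _.
by apply/eqP; rewrite eqn_leq !card_rank_class_le.
Qed.

Lemma card_rank_in (E : {set 'I_n}) :
  (n * #|[set s : 'S_n | (s^-1)%g c \in E]|)%N = (#|E| * n`!)%N.
Proof.
rewrite -sum1_card (partition_big (fun s : 'S_n => (s^-1)%g c) (mem E)) => [|s];
  last by rewrite inE.
rewrite big_distrr -sum_nat_const; apply: eq_bigr => r r_E.
rewrite -(card_rank_class r) sum1_card; congr (_ * _)%N; apply: eq_card => s.
by rewrite !inE unfold_in /= !inE andb_idl // => /eqP->.
Qed.

End RankClasses.

Lemma Rratio_le1 (R : realType) n (e : rel 'I_n) : Rratio R e <= 1.
Proof.
by rewrite /Rratio ler_pdivrMr ?ltr0n ?fact_gt0 // mul1r ler_nat -card_Sn max_card.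
Qed.

Lemma Rratio_Gp_ge (R : realType) m : 1 - 4 / m.+4%:R <= Rratio R (@Gp m.+4).
Proof.
pose E := [set r : 'I_m.+4 | ~~ (2 <= r <= m.+1)%N].
have card_E : (#|E| <= 4)%N.
  apply: leq_trans (card_size [:: inord 0; inord 1; inord m.+2; ord_max]).
  apply/subset_leq_card/fintype.subsetP => r; rewrite !inE -!val_eqE /= !inordK //.
  by have := ltn_ord r; lia.
set A := [set pi : 'S_(m.+4) | `[< representable R (@Gp m.+4) pi >]].
set B := [set s : 'S_(m.+4) | (s^-1)%g ord_max \in E].
have BC_A : ~: B \subset A.
  apply/fintype.subsetP => s; rewrite !inE negbK => r_mid.
  exact: (@representable_mid R m s r_mid).
have card_B := card_rank_in ord_max E.
have card_BC := cardsC B; rewrite card_Sn in card_BC.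
have count : (m.+4 * m.+4`! <= m.+4 * #|A| + 4 * m.+4`!)%N.
  rewrite -[X in (_ * X <= _)%N]card_BC mulnDr card_B addnC leq_add //.
    exact: leq_mul (leqnn _) (subset_leq_card BC_A).
  exact: leq_mul card_E (leqnn _).
have n_gt0 : 0 < m.+4%:R :> R by [].
rewrite /Rratio ler_pdivlMr ?ltr0n ?fact_gt0 // -(ler_pM2l n_gt0) mulrA mulrBr mulr1.
rewrite mulrCA divff ?mulr1 ?pnatr_eq0 //.
move: count; rewrite -(ler_nat R) natrD !natrM; lra.
Qed.

Local Open Scope classical_set_scope.

Theorem corollary6 (R : realType) :
  (fun n : nat => Rratio R (@Gp n)) @ \oo --> (1 : R).
Proof.
have lower_cvg : (fun n : nat => 1 - 4 / n%:R : R) @ \oo --> (1 - 4 * 0 : R).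
  rewrite -cvg_shiftS; apply: cvgB; first exact: cvg_cst.
  exact: cvgMl_tmp (@cvg_harmonic R).
rewrite mulr0 subr0 in lower_cvg.
apply: (squeeze_cvgr _ lower_cvg (cvg_cst (1 : R))).
apply: filterS (nbhs_infty_ge 4) => n /subnK <-; rewrite addn4.
by rewrite Rratio_Gp_ge Rratio_le1.
Qed.
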